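(* In the setting below, suppose $\mathbb{E}(m_0-\tilde m_0)=M_0$. Then for every $t\ge1$, $$\mathbb{E}(m_t-\tilde m_t)=\Big(\prod_{i=0}^{t-1}A_{t-i}\Big)M_0+\sum_{i=0}^{t-2}\Big(\prod_{j=0}^{i}A_{t-j}\Big)C_{t-1-i}+C_t,$$ where $A_t=F-\tilde K_tHF$, $C_t=-\tilde K_t\epsilon_t$, and $\prod_{j=0}^{i}A_{t-j}=A_tA_{t-1}\cdots A_{t-i}$.
   Context: Let $F,B,H,R,Q\in\mathbb{R}^{2\times2}$. Target motion: $x_{t+1}=Fx_t+Bu_t+w_t$, $w_t\sim\mathcal{N}(0,R)$; measurement $z_t=Hx_t+v_t$, $v_t\sim\mathcal{N}(0,Q)$; spoofed measurement $\tilde z_t=z_t+\epsilon_t$ with deterministic spoofing signals $\epsilon_t\in\mathbb{R}^2$ and deterministic controls $u_t$. Kalman filter: from initial $(m_0,\Sigma_0)$ and measurements $y_t$, $\Sigma_{t|t-1}=F\Sigma_{t-1}F^T+R$, $K_t=\Sigma_{t|t-1}H^T(H\Sigma_{t|t-1}H^T+Q)^{-1}$, $\Sigma_t=(I-K_tH)\Sigma_{t|t-1}$, $m_t=(I-K_tH)(Fm_{t-1}+Bu_{t-1})+K_ty_t$; the gains depend only on the (deterministic) initial covariance and model matrices. $(m_t,K_t)$ come from the filter with initial $(m_0,\Sigma_0)$ fed $z_t$; $(\tilde m_t,\tilde K_t)$ from the filter with initial $(\tilde m_0,\tilde\Sigma_0)$ fed $\tilde z_t$. As in the paper, the measurement is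 modeled relative to the filter estimate as $z_t=H(Fm_{t-1}+Bu_{t-1}+w_t)+v_t$ with zero-mean noises $w_t,v_t$, so that $\mathbb{E}[z_t-H(Fm_{t-1}+Bu_{t-1})]=0$. *)

From HB Require Import structures.
From mathcomp Require Import all_boot all_order all_algebra.
From mathcomp Require Import all_classical all_reals all_analysis.
Set Implicit Arguments. Unset Strict Implicit. Unset Printing Implicit Defensive.
Import Order.TTheory GRing.Theory Num.Theory.
Local Open Scope ring_scope.

Definition kf_pred {R : fieldType} (F Rw : 'M[R]_2) (S : 'M[R]_2) : 'M[R]_2 :=
  F *m S *m F^T + Rw.

Definition kf_gain_of {R : fieldType} (H Q : 'M[R]_2) (P : 'M[R]_2) : 'M[R]_2 :=
  P *m H^T *m invmx (H *m P *m H^T + Q).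

Fixpoint kf_cov {R : fieldType} (F Rw H Q S0 : 'M[R]_2) (t : nat) : 'M[R]_2 :=
  match t with
  | 0 => S0
  | t'.+1 =>
      let P := kf_pred F Rw (kf_cov F Rw H Q S0 t') in
      (1%:M - kf_gain_of H Q P *m H) *m P
  end.

(* K_t (meaningful for t >= 1): gain computed from Sigma_{t-1}. *)
Definition kf_gain {R : fieldType} (F Rw H Q S0 : 'M[R]_2) (t : nat) : 'M[R]_2 :=
  kf_gain_of H Q (kf_pred F Rw (kf_cov F Rw H Q S0 t.-1)).

Definition kf_update {R : fieldType} (F B H K : 'M[R]_2) (uprev mprev y : 'cV[R]_2)
  : 'cV[R]_2 :=
  (1%:M - K *m H) *m (F *m mprev + B *m uprev) + K *m y.

Definition vec_integrable {d} {T : measurableType d} {R : realType}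
  (P : probability T R) (X : T -> 'cV[R]_2) : Prop :=
  forall i : 'I_2, (fun w => X w i ord0) \in Lfun P 1.

Definition Evec {d} {T : measurableType d} {R : realType}
  (P : probability T R) (X : T -> 'cV[R]_2) : 'cV[R]_2 :=
  \col_(i < 2) fine ('E_P[fun w => X w i ord0])%E.

From HB Require Import structures.
From mathcomp Require Import all_boot all_order all_algebra.
From mathcomp Require Import all_classical all_reals all_analysis.
From mathcomp Require Import ring.
Set Implicit Arguments.
Unset Strict Implicit.
Unset Printing Implicit Defensive.
Import Order.TTheory GRing.Theory Num.Theory.
Local Open Scope ring_scope.

(* Both filters run with deterministic gains, so the estimation gap
   e_t = m_t - m~_t obeys e_t = A_t e_{t-1} + (K_t - K~_t)(H w_t + v_t) + C_t.
   The innovation H w_t + v_t has zero mean, hence E e_t = A_t E e_{t-1} + C_t,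
   and unrolling this affine recursion gives the formula. *)

Lemma affine_recurrence_closed_form (R : pzRingType) (n : nat)
    (A : nat -> 'M[R]_n.+1) (C x : nat -> 'cV[R]_n.+1) :
  (forall t, x t.+1 = A t.+1 *m x t + C t.+1) ->
  forall t, x t = (\prod_(i < t) A (t - i)%N) *m x 0%N
                  + \sum_(i < t) (\prod_(j < i) A (t - j)%N) *m C (t - i)%N.
Proof.
move=> x_step; elim=> [|t IH]; first by rewrite !big_ord0 mul1mx addr0.
have prodS k : \prod_(i < k.+1) A (t.+1 - i)%N = A t.+1 * \prod_(i < k) A (t - i)%N.
  by rewrite big_ord_recl subn0.
rewrite x_step IH mulmxDr mulmx_sumr prodS [in RHS]big_ord_recl big_ord0 subn0 mul1mx.
rewrite -mulmxA [C _ + _]addrC addrA; congr (_ + _ + _); apply: eq_bigr => i _.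
by rewrite /= (_ : bump 0 i = i.+1) // prodS subSS -mulmxA.
Qed.

Lemma mulmx2E (R : pzSemiRingType) (m n : nat) (M : 'M[R]_(m, 2)) (N : 'M[R]_(2, n)) i j :
  (M *m N) i j = M i 0 * N 0 j + M i 1 * N 1 j.
Proof. by rewrite mxE big_ord_recl big_ord1 (_ : lift ord0 ord0 = 1 :> 'I_2) //; apply: val_inj. Qed.

Lemma kf_updateB (R : fieldType) (F B H K L : 'M[R]_2) (u a b y e : 'cV[R]_2) :
  kf_update F B H K u a y - kf_update F B H L u b (y + e)
  = (F - L *m H *m F) *m (a - b) + (K - L) *m (y - H *m (F *m a + B *m u)) - L *m e.
Proof.
rewrite /kf_update !mulmxBl !mul1mx; apply/matrixP => i j.
by do ![rewrite mulmx2E | rewrite mxE]; ring.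
Qed.

Section RandomVectors.
Context (R : realType) (d : measure_display) (T : measurableType d)
  (P : probability T R).
Implicit Types (X Y : T -> 'cV[R]_2) (M : 'M[R]_2) (c : 'cV[R]_2).

Lemma coord_addE X Y i :
  (fun w => (X w + Y w) i ord0) = (fun w => X w i ord0) \+ (fun w => Y w i ord0).
Proof. by apply/funext => w; rewrite mxE. Qed.

Lemma coord_mulmxE M X i :
  (fun w => (M *m X w) i ord0)
  = (M i 0 \o* fun w => X w 0 ord0) \+ (M i 1 \o* fun w => X w 1 ord0).
Proof. by apply/funext => w; rewrite mulmx2E /= ![M i _ * _]mulrC. Qed.

Lemma vec_integrable_cst c : vec_integrable P (fun=> c).
Proof. by move=> i; apply: Lfun_cst. Qed.

Lemma vec_integrableD X Y :
  vec_integrable P X -> vec_integrable P Y -> vec_integrable P (fun w => X w + Y w).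
Proof. by move=> intX intY i; rewrite coord_addE; apply: rpredD. Qed.

Lemma vec_integrable_mulmx M X :
  vec_integrable P X -> vec_integrable P (fun w => M *m X w).
Proof. by move=> intX i; rewrite coord_mulmxE; apply: rpredD; apply: Lfun_scale. Qed.

Lemma Evec_cst c : Evec P (fun=> c) = c.
Proof. by apply/matrixP => i j; rewrite (ord1 j) mxE expectation_cst. Qed.

Lemma EvecD X Y : vec_integrable P X -> vec_integrable P Y ->
  Evec P (fun w => X w + Y w) = Evec P X + Evec P Y.
Proof.
move=> intX intY; apply/matrixP => i j; rewrite (ord1 j) !mxE coord_addE.
by rewrite expectationD // fineD // expectation_fin_num.
Qed.

Lemma Evec_mulmx M X : vec_integrable P X ->
  Evec P (fun w => M *m X w) = M *m Evec P X.
Proof.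
move=> intX; apply/matrixP => i j; rewrite (ord1 j) mulmx2E !mxE coord_mulmxE.
rewrite expectationD ?Lfun_scale // !expectationZl //.
by rewrite fineD ?fin_numM ?expectation_fin_num // !fineM ?expectation_fin_num.
Qed.

Lemma vec_integrable_affine M N X Y c :
  vec_integrable P X -> vec_integrable P Y ->
  vec_integrable P (fun w => M *m X w + N *m Y w + c).
Proof.
move=> intX intY.
apply: vec_integrableD _ (vec_integrable_cst c).
exact: vec_integrableD (vec_integrable_mulmx M intX) (vec_integrable_mulmx N intY).
Qed.

Lemma Evec_affine M N X Y c : vec_integrable P X -> vec_integrable P Y ->
  Evec P (fun w => M *m X w + N *m Y w + c) = M *m Evec P X + N *m Evec P Y + c.
Proof.
move=> intX intY.
have intMX := vec_integrable_mulmx M intX.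
have intNY := vec_integrable_mulmx N intY.
rewrite (EvecD (vec_integrableD intMX intNY) (vec_integrable_cst c)) EvecD //.
by rewrite !Evec_mulmx // Evec_cst.
Qed.

End RandomVectors.

Theorem corollary1 (R : realType) (d : measure_display) (T : measurableType d)
  (P : probability T R)
  (F B H Rw Q S0 St0 : 'M[R]_2)
  (u eps : nat -> 'cV[R]_2)
  (w v : nat -> T -> 'cV[R]_2)
  (z m mt : nat -> T -> 'cV[R]_2)
  (M0 : 'cV[R]_2) :
  (* zero-mean process and measurement noises *)
  (forall t, vec_integrable P (w t)) -> (forall t, Evec P (w t) = 0) ->
  (forall t, vec_integrable P (v t)) -> (forall t, Evec P (v t) = 0) ->
  (* measurement model relative to the filter estimate *)
  (forall t x, z t.+1 x = H *m (F *m m t x + B *m u t + w t.+1 x) + v t.+1 x) ->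
  (* filter with initial (m_0, S0) fed z_t *)
  (forall t x, m t.+1 x =
     kf_update F B H (kf_gain F Rw H Q S0 t.+1) (u t) (m t x) (z t.+1 x)) ->
  (* filter with initial (mt_0, St0) fed the spoofed measurements z_t + eps_t *)
  (forall t x, mt t.+1 x =
     kf_update F B H (kf_gain F Rw H Q St0 t.+1) (u t) (mt t x)
       (z t.+1 x + eps t.+1)) ->
  (* E(m_0 - mt_0) = M0 *)
  vec_integrable P (fun x => m 0%N x - mt 0%N x) ->
  Evec P (fun x => m 0%N x - mt 0%N x) = M0 ->
  let A := fun t : nat => F - kf_gain F Rw H Q St0 t *m H *m F in
  let C := fun t : nat => - (kf_gain F Rw H Q St0 t *m eps t) in
  forall t : nat, (1 <= t)%N ->
    Evec P (fun x => m t x - mt t x) =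
      (\prod_(i < t) A (t - i)%N) *m M0
      + \sum_(i < t.-1) (\prod_(j < i.+1) A (t - j)%N) *m C (t.-1 - i)%N
      + C t.
Proof.
move=> w_int w_mean v_int v_mean z_model m_step mt_step err0_int err0_mean A C.
pose err t x := m t x - mt t x.
pose innov t x := H *m w t x + v t x.
have innov_int t : vec_integrable P (innov t).
  by apply: vec_integrableD => //; apply: vec_integrable_mulmx.
have innov_mean t : Evec P (innov t) = 0.
  by rewrite EvecD ?Evec_mulmx ?w_mean ?v_mean ?mulmx0 ?addr0 //; apply: vec_integrable_mulmx.
have innovE t x : z t.+1 x - H *m (F *m m t x + B *m u t) = innov t.+1 x.
  by rewrite z_model mulmxDr addrC !addrA addNr add0r.
have err_step t : err t.+1 = fun x => A t.+1 *m err t x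
    + (kf_gain F Rw H Q S0 t.+1 - kf_gain F Rw H Q St0 t.+1) *m innov t.+1 x + C t.+1.
  by apply/funext => x; rewrite /err m_step mt_step kf_updateB innovE.
have err_int t : vec_integrable P (err t).
  by elim: t => [//|t IH]; rewrite err_step; apply: vec_integrable_affine.
have mean_step t : Evec P (err t.+1) = A t.+1 *m Evec P (err t) + C t.+1.
  by rewrite err_step Evec_affine // innov_mean mulmx0 addr0.
case=> [//|t] _; rewrite (affine_recurrence_closed_form mean_step) err0_mean.
by rewrite [\sum_(i < t.+1) _]big_ord_recl big_ord0 subn0 mul1mx [C _ + _]addrC addrA.
Qed.
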